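(* Let $\lambda$ be a well-behaved hypergraph width measure. For every hypergraph $H$ and every set $S\subseteq V(H)$, $\alpha_{\underline{H}}(S)\le\lambda_H(S)$.
   Context: A hypergraph $H$ has finite vertex set $V(H)$ and edge set $E(H)$ of subsets of $V(H)$; $||H||$ is the size of its encoding. The Gaifman graph $\underline{H}$ is the graph on $V(H)$ with two distinct vertices adjacent iff they lie in a common edge of $H$. For a graph $G$ and $S\subseteq V(G)$, $\alpha_G(S)$ is the maximum size of an independent set of $G$ contained in $S$. A width measure $\lambda$ assigns to each hypergraph $H$ a real function $\lambda_H$ on subsets of $V(H)$. $\lambda$ is well-behaved if: (1) $\lambda_H(\{x\})\ge1$; (2) $\lambda_H(S\cup T)\le\lambda_H(S)+\lambda_H(T)$; (3) equality in (2) for disjoint $S,T$ with no edge of $\underline{H}$ between them; (4) $\lambda_F(S)\le\lambda_H(T)$ whenever $V(H)\subseteq V(F)$, $E(H)\subseteq E(F)$ and $S\subseteq T$; (5) $\lambda_H(S)\le k$ is decidable in time $||H||^{O(k)}$. *)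

From mathcomp Require Import all_boot all_order all_algebra.
Set Implicit Arguments. Unset Strict Implicit. Unset Printing Implicit Defensive.
Import Order.TTheory GRing.Theory Num.Theory.

Record hypergraph (T : finType) := Hypergraph {
  hV : {set T};
  hE : {set {set T}};
  hE_sub : [forall e in hE, e \subset hV]
}.

Definition gaifman_adj (T : finType) (H : hypergraph T) (u v : T) : bool :=
  (u != v) && [exists e in hE H, (u \in e) && (v \in e)].

Definition gaifman_indep (T : finType) (H : hypergraph T) (I : {set T}) : bool :=
  [forall u in I, forall v in I, ~~ gaifman_adj H u v].

Definition gaifman_alpha (T : finType) (H : hypergraph T) (S : {set T}) : nat :=
  \max_(I : {set T} | (I \subset S) && gaifman_indep H I) #|I|.

Definition width_measure (R : realFieldType) :=
  forall T : finType, hypergraph T -> {set T} -> R.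

Local Open Scope ring_scope.

(* Conditions (1)-(4) of well-behavedness.  Condition (5) (algorithmic
   decidability) is not formalized. *)
Definition well_behaved (R : realFieldType) (lam : width_measure R) : Prop :=
  (forall (T : finType) (H : hypergraph T) (x : T),
      x \in hV H -> 1 <= lam T H [set x]) /\
  (forall (T : finType) (H : hypergraph T) (S S' : {set T}),
      S \subset hV H -> S' \subset hV H ->
      lam T H (S :|: S') <= lam T H S + lam T H S') /\
  (forall (T : finType) (H : hypergraph T) (S S' : {set T}),
      S \subset hV H -> S' \subset hV H -> [disjoint S & S'] ->
      (forall u v, u \in S -> v \in S' -> ~~ gaifman_adj H u v) ->
      lam T H (S :|: S') = lam T H S + lam T H S') /\
  (forall (T : finType) (H F : hypergraph T) (S S' : {set T}),
      hV H \subset hV F -> hE H \subset hE F ->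
      S \subset S' -> S' \subset hV H ->
      lam T F S <= lam T H S').

From mathcomp Require Import all_boot all_order all_algebra.
Set Implicit Arguments. Unset Strict Implicit. Unset Printing Implicit Defensive.
Import Order.TTheory GRing.Theory Num.Theory.
Local Open Scope ring_scope.

(* An independent set I splits as a vertex x plus I :\ x with no Gaifman edge
   between the parts, so additivity and lam {x} >= 1 give lam I >= #|I| by
   induction; monotonicity then lifts this from I to any S containing I. *)

Section IndependentSets.

Variables (T : finType) (H : hypergraph T).

Lemma gaifman_indepS (I J : {set T}) :
  I \subset J -> gaifman_indep H J -> gaifman_indep H I.
Proof.
move=> sIJ /forall_inP indJ; apply/forall_inP => u uI; apply/forall_inP => v vI.
by move/forall_inP: (indJ u (subsetP sIJ u uI)); apply; apply: (subsetP sIJ).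
Qed.

Variables (R : realFieldType) (f : {set T} -> R).

Hypothesis f_set1_ge1 : forall x, x \in hV H -> 1 <= f [set x].

Hypothesis f_additive : forall S S' : {set T},
  S \subset hV H -> S' \subset hV H -> [disjoint S & S'] ->
  (forall u v, u \in S -> v \in S' -> ~~ gaifman_adj H u v) ->
  f (S :|: S') = f S + f S'.

Hypothesis f_mono : forall S S' : {set T},
  S \subset S' -> S' \subset hV H -> f S <= f S'.

Lemma f_set0 : f set0 = 0.
Proof.
have no_edge u v : u \in set0 -> v \in set0 -> ~~ gaifman_adj H u v by rewrite inE.
have disj : [disjoint set0 & set0 : {set T}] by rewrite -setI_eq0 set0I.
have := f_additive (sub0set _) (sub0set _) disj no_edge.
by rewrite setU0 -{1}[f set0]addr0 => /addrI <-.
Qed.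

Lemma gaifman_indep_card_le (I : {set T}) :
  I \subset hV H -> gaifman_indep H I -> #|I|%:R <= f I.
Proof.
have [n] := ubnP #|I|; elim: n I => // n IH I ltIn sIV indI.
have [->|[x xI]] := set_0Vmem I; first by rewrite cards0 f_set0.
have sxV : [set x] \subset hV H by rewrite sub1set (subsetP sIV).
have sI'V : I :\ x \subset hV H := subset_trans (subsetDl I _) sIV.
have no_edge u v : u \in [set x] -> v \in I :\ x -> ~~ gaifman_adj H u v.
  rewrite inE => /eqP -> /setD1P[_ vI].
  by move/forall_inP: indI => /(_ x xI) /forall_inP; apply.
have disj : [disjoint [set x] & I :\ x] by rewrite disjoints1 !inE eqxx.
rewrite -{2}(setD1K xI) f_additive // (cardsD1 x I) xI add1n -addn1 natrD addrC.
apply: lerD; first exact: f_set1_ge1 (subsetP sIV x xI).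
have ltI'n : (#|I :\ x| < n)%N by move: ltIn; rewrite (cardsD1 x I) xI.
exact: IH ltI'n sI'V (gaifman_indepS (subsetDl I _) indI).
Qed.

Lemma gaifman_alpha_le (S : {set T}) :
  S \subset hV H -> (gaifman_alpha H S)%:R <= f S.
Proof.
move=> sSV; apply: (big_ind (fun n : nat => n%:R <= f S)).
- by have := f_mono (sub0set S) sSV; rewrite f_set0.
- by move=> a b; rewrite /maxn; case: ltnP.
move=> I /andP[sIS indI]; have sIV := subset_trans sIS sSV.
exact: le_trans (gaifman_indep_card_le sIV indI) (f_mono sIS sSV).
Qed.

End IndependentSets.

Theorem mainTheorem16 (R : realFieldType) (lam : width_measure R) :
  well_behaved lam ->
  forall (T : finType) (H : hypergraph T) (S : {set T}),
    S \subset hV H -> (gaifman_alpha H S)%:R <= lam T H S.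
Proof.
move=> [lam_set1 [_ [lam_additive lam_mono]]] T H.
apply: gaifman_alpha_le => [x|S S'|S S' sSS' sS'V].
- exact: lam_set1.
- exact: lam_additive.
- exact: lam_mono (subxx _) (subxx _) sSS' sS'V.
Qed.
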